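(* Assume $\theta_i<1$ for all $i$ and $\theta_j>0$ for some $j$. Suppose $\mathcal G(C)$ is a star topology with center node $l$ and $0<\theta_l<1$. Let $x^*$ be any equilibrium social power of systems (A) and (B). Then: (i) for any $i,j\in\mathcal V_f$, if $C_{li}>C_{lj}$ then $x^*_i>x^*_j$; (ii) for any $i\in\mathcal V_f$ and $j\in\mathcal V_p\setminus\{l\}$, if $C_{li}=C_{lj}$ then $x^*_i>x^*_j$; (iii) for any $i,j\in\mathcal V_p\setminus\{l\}$ with $C_{li}=C_{lj}$, $x^*_i>x^*_j$ if and only if $\theta_i<\theta_j$; (iv) for any $i,j\in\mathcal V_p\setminus\{l\}$ with $\theta_i=\theta_j$, $x^*_i>x^*_j$ if and only if $C_{li}>C_{lj}$.
   Context: Let $n\ge 2$, $\mathbf 1_n$ the all-ones vector, $I_n$ the identity matrix, $\Delta_n=\{x\in\mathbb R^n: x\ge 0,\ \mathbf 1_n^Tx=1\}$. Let $C\in\mathbb R^{n\times n}$ be a nonnegative row-stochastic matrix with zero diagonal, and $\mathcal G(C)$ the digraph on $\{1,\dots,n\}$ with an edge $(i,j)$ iff $C_{ij}>0$. $\mathcal G(C)$ is a star topology with center node $l$ if every edge of $\mathcal G(C)$ is either from $l$ or to $l$ (i.e. $C_{ij}>0$ implies $i=l$ or $j=l$). Let $\theta=(\theta_1,\dots,\theta_n)\in[0,1]^n$, $\Theta=\mathrm{diag}(\theta)$, $W(x)=\mathrm{diag}(x)+(I_n-\mathrm{diag}(x))C$. Let $\mathcal V_f=\{i:\theta_i=0\}$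 and $\mathcal V_p=\{i:\theta_i>0\}$. System (A): $x(s+1)=F(x(s))$, $x(0)\in\Delta_n$, where $F(x)=(I_n-\Theta)(I_n-W(x)^T\Theta)^{-1}\mathbf 1_n/n$; an equilibrium is $x^*\in\Delta_n$ with $F(x^* )=x^*$. System (B): $V(k+1)=\Theta W(x(k))V(k)+I_n-\Theta$, $x(k+1)=V(k+1)^T\mathbf 1_n/n$, with $V(0)=I_n$, $x(0)\in\Delta_n$; an equilibrium is a pair $(V^*,x^* )$ with $V^*$ row-stochastic, $x^*\in\Delta_n$, $V^*=\Theta W(x^* )V^*+I_n-\Theta$, $x^*=(V^* )^T\mathbf 1_n/n$. The equilibrium social powers of (A) and (B) coincide (the fixed points of $F$). *)

(* R is an arbitrary real field (statement is purely algebraic/order-theoretic). *)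
From HB Require Import structures.
From mathcomp Require Import all_boot all_order all_algebra.
Set Implicit Arguments. Unset Strict Implicit. Unset Printing Implicit Defensive.
Import Order.TTheory GRing.Theory Num.Theory.
Local Open Scope ring_scope.

Definition row_stochastic (R : numDomainType) (n : nat) (C : 'M[R]_n) : Prop :=
  (forall i j, 0 <= C i j) /\ (forall i, \sum_(j < n) C i j = 1).

Definition zero_diag (R : numDomainType) (n : nat) (C : 'M[R]_n) : Prop :=
  forall i, C i i = 0.

(* G(C) has edge (i,j) iff C_ij > 0; star with center l *)
Definition star_topology (R : numDomainType) (n : nat) (C : 'M[R]_n) (l : 'I_n) : Prop :=
  forall i j, 0 < C i j -> i = l \/ j = l.

Definition in_simplex (R : numDomainType) (n : nat) (x : 'cV[R]_n) : Prop :=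
  (forall i, 0 <= x i 0) /\ \sum_(i < n) x i 0 = 1.

Definition Theta (R : numDomainType) (n : nat) (theta : 'I_n -> R) : 'M[R]_n :=
  diag_mx (\row_i theta i).

Definition Wmx (R : numDomainType) (n : nat) (C : 'M[R]_n) (x : 'cV[R]_n) : 'M[R]_n :=
  diag_mx (x^T) + (1%:M - diag_mx (x^T)) *m C.

Definition Fmap (R : numFieldType) (n : nat) (C : 'M[R]_n) (theta : 'I_n -> R)
  (x : 'cV[R]_n) : 'cV[R]_n :=
  (1%:M - Theta theta) *m invmx (1%:M - (Wmx C x)^T *m Theta theta)
    *m const_mx (n%:R^-1).

(* equilibrium social power of (A) (equivalently of (B)) *)
Definition equilibrium (R : numFieldType) (n : nat) (C : 'M[R]_n) (theta : 'I_n -> R)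
  (x : 'cV[R]_n) : Prop :=
  in_simplex x /\ Fmap C theta x = x.

From HB Require Import structures.
From mathcomp Require Import all_boot all_order all_algebra.
From mathcomp Require Import ring lra.
Set Implicit Arguments. Unset Strict Implicit. Unset Printing Implicit Defensive.
Import Order.TTheory GRing.Theory Num.Theory.
Local Open Scope ring_scope.

(* Write y := (I - W(x)^T Theta)^-1 1/n, so that an equilibrium satisfies
   x_i = (1 - theta_i) y_i and y = 1/n + W(x)^T Theta y; the inverse exists
   because W(x) is row-stochastic and every theta_i < 1.  In a star with
   center l, a non-center node i only hears from l, and the fixed-point
   equation for y_i becomes, in terms of x_i,
     x_i - theta_i x_i^2 = (1 - theta_i) (1/n + C_li K),
   with K = (1 - x_l) theta_l y_l > 0 the same for all i.  The four
   comparisons follow from this quadratic relation, since any two distinct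
   nodes satisfy x_i + x_j <= 1. *)

Section InfluenceMatrix.
Variables (R : numDomainType) (n : nat) (C : 'M[R]_n) (x : 'cV[R]_n).

Lemma Wmx_entry j i : Wmx C x j i = x j 0 *+ (j == i) + (1 - x j 0) * C j i.
Proof.
rewrite /Wmx mxE [diag_mx _ j i]mxE mxE; congr (_ + _).
by rewrite -diag_const_mx -linearB /= mul_diag_mx !mxE.
Qed.

Lemma Wmx_row_sum k : (forall i, \sum_j C i j = 1) -> \sum_j Wmx C x k j = 1.
Proof.
move=> C1; under eq_bigr do rewrite Wmx_entry.
rewrite big_split /= -mulr_sumr C1 mulr1 (bigD1 k) //= eqxx big1 ?addr0.
  by rewrite mulr1n addrC subrK.
by move=> j /negPf; rewrite eq_sym => ->.
Qed.

Lemma Wmx_ge0 k j :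
  (forall i, 0 <= x i 0 <= 1) -> (forall i j, 0 <= C i j) -> 0 <= Wmx C x k j.
Proof.
move=> x01 C0; rewrite Wmx_entry; have /andP[x0 x1] := x01 k.
by rewrite addr_ge0 ?mulrn_wge0 ?mulr_ge0 ?subr_ge0.
Qed.

Lemma I_sub_WTtheta_entry theta i j :
  (1%:M - (Wmx C x)^T *m Theta theta) i j = (i == j)%:R - Wmx C x j i * theta j.
Proof. by rewrite /Theta mul_mx_diag !mxE. Qed.

End InfluenceMatrix.

(* Taking norms and summing, sum_j |u_j| <= sum_k theta_k |u_k|,
   which forces u = 0 as every theta_k < 1. *)
Lemma stochastic_fixed_eq0 (R : numDomainType) n (W : 'M[R]_n) theta (u : 'I_n -> R) :
  (forall k j, 0 <= W k j) -> (forall k, \sum_j W k j = 1) ->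
  (forall k, 0 <= theta k) -> (forall k, theta k < 1) ->
  (forall j, u j = \sum_k W k j * theta k * u k) -> forall k, u k = 0.
Proof.
move=> W0 W1 t0 t1 hu.
have norm_le j : `|u j| <= \sum_k W k j * theta k * `|u k|.
  rewrite hu; apply: le_trans (ler_norm_sum _ _ _) _.
  by apply: ler_sum => k _; rewrite !normrM (ger0_norm (W0 k j)) (ger0_norm (t0 k)).
have sum_le : \sum_j `|u j| <= \sum_k theta k * `|u k|.
  apply: le_trans (ler_sum _ (fun j _ => norm_le j)) _.
  rewrite exchange_big /=; apply: ler_sum => k _.
  by rewrite -!mulr_suml W1 mul1r.
have t1' k : 0 <= 1 - theta k by rewrite subr_ge0 ltW.
have : \sum_k (1 - theta k) * `|u k| == 0.
  rewrite eq_le sumr_ge0 ?andbT => [|k _]; last by rewrite mulr_ge0.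
  rewrite -subr_ge0 -sumrB in sum_le; rewrite -oppr_ge0 -sumrN.
  by apply: le_trans sum_le _; apply: ler_sum => k _; rewrite mulrBl mul1r opprB.
rewrite psumr_eq0 => [/allP hz k|k _]; last by rewrite mulr_ge0.
move: (hz k (mem_index_enum k)); rewrite /= mulf_eq0 normr_eq0 subr_eq0.
by case/orP=> /eqP // h; have := t1 k; rewrite -h ltxx.
Qed.

Lemma I_sub_WTtheta_unit (R : realFieldType) n (C : 'M[R]_n) (x : 'cV[R]_n) theta :
  (forall k j, 0 <= Wmx C x k j) -> (forall k, \sum_j Wmx C x k j = 1) ->
  (forall k, 0 <= theta k) -> (forall k, theta k < 1) ->
  (1%:M - (Wmx C x)^T *m Theta theta) \in unitmx.
Proof.
move=> W0 W1 t0 t1; set M := 1%:M - _.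
rewrite -unitmx_tr -row_free_unit -kermx_eq0; apply/eqP/matrixP => r k.
rewrite [RHS]mxE; apply: (@stochastic_fixed_eq0 _ _ _ _ (kermx M^T r) W0 W1 t0 t1) => j {k}.
move/matrixP/(_ r j): (mulmx_ker M^T) => h; rewrite mxE [RHS]mxE in h.
move: h; under eq_bigr do rewrite [M^T _ _]mxE /M I_sub_WTtheta_entry mulrBr.
rewrite sumrB (bigD1 j) //= eqxx mulr1 big1 ?addr0; last first.
  by move=> i /negPf; rewrite eq_sym => ->; rewrite mulr0.
by move/eqP; rewrite subr_eq0 => /eqP ->; apply: eq_bigr => i _; ring.
Qed.

Lemma simplex_le1 (R : numDomainType) n (x : 'cV[R]_n) i :
  in_simplex x -> x i 0 <= 1.
Proof. by case=> x0 x1; rewrite -x1 (bigD1 i) //= lerDl sumr_ge0. Qed.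

Lemma simplex_pair_le1 (R : numDomainType) n (x : 'cV[R]_n) i j :
  in_simplex x -> i != j -> x i 0 + x j 0 <= 1.
Proof.
case=> x0 x1 hij; rewrite -x1 (bigD1 i) //= (bigD1 j) /=; last by rewrite eq_sym.
by rewrite addrA lerDl sumr_ge0.
Qed.

Lemma exists_ord_neq n (l : 'I_n) : (2 <= n)%N -> exists i : 'I_n, i != l.
Proof.
move=> hn; have : (0 < #|predC1 l|)%N by rewrite cardC1 card_ord -ltnS prednK // ltnW.
by case/card_gt0P=> i; exists i.
Qed.

Section Equilibrium.
Variables (R : realFieldType) (n : nat) (C : 'M[R]_n) (theta : 'I_n -> R) (x : 'cV[R]_n).
Hypotheses (C0 : forall i j, 0 <= C i j) (C1 : forall i, \sum_j C i j = 1).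
Hypotheses (t0 : forall i, 0 <= theta i) (t1 : forall i, theta i < 1).
Hypothesis eqx : equilibrium C theta x.

Let M := 1%:M - (Wmx C x)^T *m Theta theta.
Let y : 'cV[R]_n := invmx M *m const_mx n%:R^-1.

Let W0 k j : 0 <= Wmx C x k j.
Proof.
by case: eqx => hx _; apply: Wmx_ge0 => // i; rewrite simplex_le1 // andbT; case: hx.
Qed.

Let M_unit : M \in unitmx.
Proof. by apply: I_sub_WTtheta_unit => // k; apply Wmx_row_sum. Qed.

Lemma equilibrium_scaled k : x k 0 = (1 - theta k) * y k 0.
Proof.
case: eqx => _; rewrite /Fmap -/M -mulmxA -/y => /matrixP/(_ k 0) <-.
by rewrite mulmxBl mul1mx /Theta mul_diag_mx !mxE; ring.
Qed.

Lemma equilibrium_fixed i : y i 0 = n%:R^-1 + \sum_j Wmx C x j i * theta j * y j 0.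
Proof.
have := mulKVmx M_unit (const_mx n%:R^-1 : 'cV_n); rewrite -/y => /matrixP/(_ i 0).
rewrite [RHS]mxE mxE.
under eq_bigr do rewrite I_sub_WTtheta_entry mulrBl.
rewrite sumrB (bigD1 i) //= eqxx mul1r big1 ?addr0 => [<-|j /negPf]; first ring.
by rewrite eq_sym => ->; rewrite mul0r.
Qed.

Lemma equilibrium_ge_inv i : n%:R^-1 <= y i 0.
Proof.
have y0 j : 0 <= y j 0.
  case: eqx => -[x0 _] _; have := x0 j.
  by rewrite equilibrium_scaled pmulr_rge0 // subr_gt0.
by rewrite equilibrium_fixed lerDl sumr_ge0 // => j _; rewrite !mulr_ge0.
Qed.

Lemma equilibrium_gt0 i : (0 < n)%N -> 0 < x i 0.
Proof.
move=> n0; rewrite equilibrium_scaled mulr_gt0 ?subr_gt0 //.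
by apply: lt_le_trans (equilibrium_ge_inv i); rewrite invr_gt0 ltr0n.
Qed.

Section Star.
Variable l : 'I_n.
Hypotheses (Cd : zero_diag C) (star : star_topology C l).

Definition star_gain := (1 - x l 0) * theta l * y l 0.

Lemma star_gain_gt0 : (2 <= n)%N -> 0 < theta l -> 0 < star_gain.
Proof.
move=> hn tl0; have n0 : (0 < n)%N by apply: leq_trans hn.
have [i il] := exists_ord_neq l hn.
have xl1 : x l 0 < 1.
  have := simplex_pair_le1 eqx.1 il; have := equilibrium_gt0 i n0; lra.
rewrite !mulr_gt0 ?subr_gt0 //; apply: lt_le_trans (equilibrium_ge_inv l).
by rewrite invr_gt0 ltr0n.
Qed.

Lemma star_off_center j i : j != l -> i != l -> C j i = 0.
Proof.
move=> jl il; have := C0 j i; rewrite le_eqVlt => /orP[/eqP <- //|/star].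
by case=> /eqP; rewrite ?(negPf jl) ?(negPf il).
Qed.

Lemma star_equilibrium i : i != l ->
  x i 0 - theta i * x i 0 ^+ 2 = (1 - theta i) * (n%:R^-1 + C l i * star_gain).
Proof.
move=> il; have e := equilibrium_fixed i.
rewrite (bigD1 i) //= (bigD1 l) 1?eq_sym //= big1 ?addr0 in e; last first.
  move=> j /andP[ji jl].
  by rewrite Wmx_entry (negPf ji) star_off_center // mulr0n mulr0 addr0 !mul0r.
rewrite !Wmx_entry eqxx eq_sym (negPf il) Cd mulr1n mulr0n mulr0 addr0 add0r in e.
rewrite equilibrium_scaled.
transitivity ((1 - theta i) * (y i 0 - theta i * (1 - theta i) * y i 0 ^+ 2)); first ring.
by rewrite {1}e /star_gain [x i 0]equilibrium_scaled; congr (_ * _); ring.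
Qed.

End Star.
End Equilibrium.

Lemma quadratic_cmp_theta (R : realFieldType) (xi xj ti tj a : R) :
  0 < xi -> 0 < xj -> xi + xj <= 1 -> 0 <= ti < 1 -> 0 <= tj < 1 ->
  xi - ti * xi ^+ 2 = (1 - ti) * a -> xj - tj * xj ^+ 2 = (1 - tj) * a ->
  xj < xi <-> ti < tj.
Proof.
move=> xi0 xj0 s1 /andP[ti0 ti1] /andP[tj0 tj1]; rewrite !expr2 => ei ej.
have ai : 0 < a - xi * xi by nra.
have aj : 0 < a - xj * xj by nra.
(* Eliminating ti and tj between the two relations. *)
have hid : (tj - ti) * ((a - xi * xi) * (a - xj * xj))
           = (xj - xi) * (a * (xi + xj - 1) - xi * xj) by nra.
have hQ : a * (xi + xj - 1) - xi * xj < 0 by nra.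
have hP : 0 < (a - xi * xi) * (a - xj * xj) by rewrite mulr_gt0.
split=> h.
  have : 0 < (tj - ti) * ((a - xi * xi) * (a - xj * xj)) by rewrite hid; nra.
  by rewrite pmulr_lgt0 // subr_gt0.
have : 0 < (xj - xi) * (a * (xi + xj - 1) - xi * xj).
  by rewrite -hid mulr_gt0 ?subr_gt0.
by rewrite nmulr_lgt0 // subr_lt0.
Qed.

Lemma quadratic_cmp_gain (R : realFieldType) (xi xj t c K ci cj : R) :
  0 < xi -> 0 < xj -> xi + xj <= 1 -> 0 <= t < 1 -> 0 < K ->
  xi - t * xi ^+ 2 = (1 - t) * (c + ci * K) ->
  xj - t * xj ^+ 2 = (1 - t) * (c + cj * K) ->
  xj < xi <-> cj < ci.
Proof.
move=> xi0 xj0 s1 /andP[t0 t1] K0 ei ej.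
have hid : (xi - xj) * (1 - t * (xi + xj)) = (1 - t) * K * (ci - cj).
  transitivity ((xi - t * xi ^+ 2) - (xj - t * xj ^+ 2)); first ring.
  by rewrite ei ej; ring.
have hp : 0 < 1 - t * (xi + xj) by nra.
have hq : 0 < (1 - t) * K by rewrite mulr_gt0 ?subr_gt0.
by rewrite -subr_gt0 -(pmulr_lgt0 _ hp) hid pmulr_rgt0 // subr_gt0.
Qed.

Theorem corollary3 (R : realFieldType) (n : nat) (hn : (2 <= n)%N)
  (C : 'M[R]_n) (theta : 'I_n -> R) (l : 'I_n) (xs : 'cV[R]_n) :
  row_stochastic C -> zero_diag C ->
  (forall i, 0 <= theta i) ->
  (forall i, theta i < 1) ->
  (exists j, 0 < theta j) ->
  star_topology C l ->
  0 < theta l -> theta l < 1 ->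
  equilibrium C theta xs ->
  (* (i) *)
  (forall i j, theta i = 0 -> theta j = 0 ->
     C l j < C l i -> xs j 0 < xs i 0) /\
  (* (ii) *)
  (forall i j, theta i = 0 -> 0 < theta j -> j != l ->
     C l i = C l j -> xs j 0 < xs i 0) /\
  (* (iii) *)
  (forall i j, 0 < theta i -> i != l -> 0 < theta j -> j != l ->
     C l i = C l j -> (xs j 0 < xs i 0 <-> theta i < theta j)) /\
  (* (iv) *)
  (forall i j, 0 < theta i -> i != l -> 0 < theta j -> j != l ->
     theta i = theta j -> (xs j 0 < xs i 0 <-> C l j < C l i)).
Proof.
move=> [C0 C1] Cd t0 t1 _ star tl0 _ eqx.
have n0 : (0 < n)%N by apply: leq_trans hn.
have x0 i := equilibrium_gt0 C0 C1 t0 t1 eqx i n0.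
have xij i j : i != j -> xs i 0 + xs j 0 <= 1 := simplex_pair_le1 eqx.1.
have key i := star_equilibrium C0 C1 t0 t1 eqx Cd star (i := i).
have K0 := star_gain_gt0 C0 C1 t0 t1 eqx hn tl0.
have t01 i : 0 <= theta i < 1 by rewrite t0 t1.
have free_nl i : theta i = 0 -> i != l.
  by move=> ti; apply: contraTneq tl0 => <-; rewrite ti ltxx.
split; [|split; [|split]].
- move=> i j ti tj Cij.
  have := key i (free_nl i ti); have := key j (free_nl j tj).
  rewrite ti tj !(mul0r, subr0, mul1r) => -> ->.
  by rewrite ltrD2l ltr_pM2r.
- move=> i j ti tj jl Cij.
  have ij : i != j by apply: contraTneq tj => <-; rewrite ti ltxx.
  have ei := key i (free_nl i ti); have := key j jl; rewrite -Cij => ej.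
  by rewrite (quadratic_cmp_theta (x0 i) (x0 j) (xij i j ij) (t01 i) (t01 j) ei ej) ti.
- move=> i j _ il _ jl Cij; case: (eqVneq i j) => [<-|ij]; first by rewrite !ltxx.
  apply: quadratic_cmp_theta (x0 i) (x0 j) (xij i j ij) (t01 i) (t01 j) (key i il) _.
  by rewrite Cij key.
- move=> i j _ il _ jl tij; case: (eqVneq i j) => [<-|ij]; first by rewrite !ltxx.
  apply: quadratic_cmp_gain (x0 i) (x0 j) (xij i j ij) (t01 i) K0 (key i il) _.
  by rewrite tij key.
Qed.
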